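(* A set $S\subseteq S_n$ is symmetric if and only if the set system $A(S)$ is harmonic.
   Context: $\mathrm{Des}(w)=\{i: w(i)>w(i+1)\}$; $F_{n,D}=\sum x_{i_1}\cdots x_{i_n}$ over $i_1\le\cdots\le i_n$ with $i_j<i_{j+1}$ whenever $j\in D$; $S\subseteq S_n$ is symmetric if $Q(S)=\sum_{w\in S}F_{n,\mathrm{Des}(w)}$ is a symmetric function. A set system is $H=(U,(A_1,\dots,A_m))$ with $A_i\subseteq U$ (ordered). For $I\subseteq[m]$, $H_I=\bigcap_{i\in I}A_i$ (equal to $U$ if $I=\emptyset$). The run decomposition of a finite set $I$ of positive integers is the partition given by the sizes, in nonincreasing order, of the maximal runs of consecutive integers in $I$. $H$ is harmonic if $|H_I|=|H_J|$ for all $I,J\subseteq[m]$ with the same run decomposition. For $S\subseteq S_n$, $A(S)=(S,(A_1,\dots,A_{n-1}))$ with $A_i=\{\pi\in S:\pi(i)>\pi(i+1)\}$. *)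

From mathcomp Require Import all_boot all_fingroup.
Set Implicit Arguments. Unset Strict Implicit. Unset Printing Implicit Defensive.

(* Conventions: positions 1..n of the paper are 0..n-1 here; variables
   x_1, x_2, ... of the paper are indexed by 0, 1, 2, ... here. *)

Definition pval n (w : {perm 'I_n}) (k : nat) : nat :=
  if insub k is Some i then val (w i) else 0.

Definition Des n (w : {perm 'I_n}) : {set 'I_n} :=
  [set i : 'I_n | (i.+1 < n) && (pval w i.+1 < pval w i)].

(* A homogeneous power series in x_0, x_1, ... is represented by its coefficient
   function on monomials; a monomial x_{i_1} ... x_{i_k} is represented by the
   weakly increasing sequence [:: i_1; ...; i_k] of its variable indices. *)
Definition series := seq nat -> nat.

Definition Ffund n (D : {set 'I_n}) : series := fun s =>
  if [&& size s == n, sorted leq s &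
      [forall j : 'I_n, (j \in D) ==> (j.+1 < n) ==> (nth 0 s j < nth 0 s j.+1)]]
  then 1 else 0.

Definition Qfun n (S : {set {perm 'I_n}}) : series := fun s =>
  \sum_(w in S) Ffund (Des w) s.

(* f is symmetric: invariant under every permutation sigma of the variables,
   i.e. the coefficient of the monomial x_{sigma(i_1)}...x_{sigma(i_k)}
   equals that of x_{i_1}...x_{i_k}. *)
Definition symmetric_series (f : series) : Prop :=
  forall sigma : nat -> nat, bijective sigma ->
  forall s : seq nat, sorted leq s -> f (sort leq (map sigma s)) = f s.

Definition symmetric_set n (S : {set {perm 'I_n}}) : Prop :=
  symmetric_series (Qfun S).

Record setsystem (T : finType) (m : nat) := SetSystem {
  ss_U : {set T};
  ss_A : 'I_m -> {set T} }.

Definition ssI (T : finType) m (H : setsystem T m) (I : {set 'I_m}) : {set T} :=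
  if I == set0 then ss_U H else \bigcap_(i in I) ss_A H i.

Definition inI m (I : {set 'I_m}) (k : nat) : bool :=
  if insub k is Some i then i \in I else false.

Definition run_start m (I : {set 'I_m}) (k : nat) : bool :=
  inI I k && ((k == 0) || ~~ inI I k.-1).

Definition run_length m (I : {set 'I_m}) (k : nat) : nat :=
  find (fun l => ~~ inI I (k + l)) (iota 0 m.+1).

Definition run_decomp m (I : {set 'I_m}) : seq nat :=
  sort geq [seq run_length I k | k <- iota 0 m & run_start I k].

Definition harmonic (T : finType) m (H : setsystem T m) : Prop :=
  forall I J : {set 'I_m}, run_decomp I = run_decomp J ->
    #|ssI H I| = #|ssI H J|.

Definition AS n (S : {set {perm 'I_n}}) : setsystem {perm 'I_n} n.-1 :=
  SetSystem S (fun i : 'I_n.-1 => [set p in S | pval p i.+1 < pval p i]).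

From Pilot Require Import Defs.
From mathcomp Require Import all_boot all_fingroup all_algebra zify.
Set Implicit Arguments. Unset Strict Implicit. Unset Printing Implicit Defensive.
Import GRing.Theory.

(* A set of positions is encoded by its bit mask b, and its run structure by
   [runs b], the lengths of the maximal blocks of marked positions, empty blocks
   included.  Let [ncover S b] (resp. [navoid S b]) count the w in S whose descent
   set contains (resp. misses) the positions marked by b.  Then |H_I| is
   [ncover S] at the mask of I, and the run decomposition of I determines the runs
   of its mask up to order, so A(S) is harmonic iff [ncover S] is invariant under
   permuting runs.  The coefficient of a monomial in Q(S) is [navoid S b] for the
   mask b of ties between consecutive variables; the runs of b are the
   multiplicities of the variables minus one, so S is symmetric iff [navoid S] is
   run-invariant.  Finally [ncover S] and [navoid S] are Moebius transforms of each
   other over submasks, and the Moebius transform preserves run invariance: a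
   submask of b is an independent choice of a submask in each block of b, so the
   transform is an iterated sum over the blocks whose value does not depend on
   their order. *)

(** * Runs of a bit mask *)

Definition inc_head (v : seq nat) : seq nat := (head 0 v).+1 :: behead v.

(* [runs b = [:: a_0; ...; a_k]] for [b = 1^a_0 0 1^a_1 0 ... 0 1^a_k]. *)
Fixpoint runs (b : bitseq) : seq nat :=
  if b is x :: b' then (if x then inc_head (runs b') else 0 :: runs b') else [:: 0].

Lemma runsE b : runs b = head 0 (runs b) :: behead (runs b).
Proof. by case: b => [|[] b]. Qed.

Lemma inc_head_runs_cat c v : inc_head (runs c ++ v) = inc_head (runs c) ++ v.
Proof. by rewrite [runs c]runsE. Qed.

Lemma sumn_size_runs b : sumn (runs b) + size (runs b) = (size b).+1.
Proof.
elim: b => [//|[] b IH] /=; last by rewrite addnS IH.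
by move: IH; rewrite [runs b]runsE /= !addSn !addnS => -[->].
Qed.

Lemma sumn_runs b : sumn (runs b) = count id b.
Proof.
elim: b => [//|[] b IH] /=; last by rewrite IH.
by move: IH; rewrite [runs b]runsE /= => <-.
Qed.

Lemma perm_runs_size c c' : perm_eq (runs c) (runs c') -> size c = size c'.
Proof.
move=> pc; apply/succn_inj; rewrite -!sumn_size_runs.
by rewrite (perm_sumn pc) (perm_size pc).
Qed.

Definition of_runs (a : seq nat) : bitseq :=
  if a is x :: a' then nseq x true ++ flatten [seq false :: nseq y true | y <- a']
  else [::].

Lemma runs_nseq_cat x b :
  runs (nseq x true ++ b) = (head 0 (runs b) + x) :: behead (runs b).
Proof. by elim: x => [|x IH] /=; rewrite ?addn0 -?runsE // IH addnS. Qed.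

Lemma of_runsK a : a != [::] -> runs (of_runs a) = a.
Proof.
case: a => [//|x a] _; elim: a x => [|y a IH] x.
  by rewrite /= cats0 -[nseq x true]cats0 runs_nseq_cat.
by rewrite /= runs_nseq_cat /=; move: (IH y) => /= ->.
Qed.

(** * Moebius transform over submasks *)

Fixpoint submasks (b : bitseq) : seq bitseq :=
  if b is x :: b' then
    let r := submasks b' in
    if x then map (cons false) r ++ map (cons true) r else map (cons false) r
  else [:: [::]].

Lemma size_submasks b c : c \in submasks b -> size c = size b.
Proof.
elim: b c => [|[] b IH] c /=; first by rewrite inE => /eqP ->.
  by rewrite mem_cat => /orP[] /mapP[d /IH <- ->].
by move=> /mapP[d /IH <- ->].
Qed.

Definition mobius (F : bitseq -> int) (b : bitseq) : int :=
  (\sum_(c <- submasks b) (-1) ^+ count id c * F c)%R.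

Definition run_invariant m (F : bitseq -> int) :=
  forall c c', size c = m -> perm_eq (runs c) (runs c') -> F c = F c'.

Definition perm_invariant (phi : seq nat -> int) :=
  forall v v', perm_eq v v' -> phi v = phi v'.

Lemma perm_invariant_catl phi u :
  perm_invariant phi -> perm_invariant (fun v => phi (u ++ v)).
Proof. by move=> hphi v v' pv; apply: hphi; rewrite perm_cat2l. Qed.

(* [block_sum phi [:: a_0; ...; a_k]] is the sum of
   [phi (runs c_0 ++ ... ++ runs c_k)] over all submasks [c_i] of [nseq a_i true]. *)
Fixpoint block_sum (phi : seq nat -> int) (a : seq nat) : int :=
  if a is x :: a' then
    (\sum_(c <- submasks (nseq x true)) block_sum (fun v => phi (runs c ++ v)) a')%R
  else phi [::].

Lemma block_sum_cons phi x a :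
  block_sum phi (x :: a) =
  (\sum_(c <- submasks (nseq x true)) block_sum (fun v => phi (runs c ++ v)) a)%R.
Proof. by []. Qed.

Lemma eq_block_sum phi psi a : phi =1 psi -> block_sum phi a = block_sum psi a.
Proof.
elim: a phi psi => [|x a IH] phi psi e /=; first exact: e.
by apply: eq_bigr => c _; apply: IH => v; apply: e.
Qed.

Lemma sum_submasks_runs (g : seq nat -> int) b :
  (\sum_(c <- submasks b) g (runs c))%R = block_sum g (runs b).
Proof.
elim: b g => [|x b IH] g; first by rewrite /= !big_seq1.
case: x; rewrite [submasks _]/= ?big_cat !big_map /=; last first.
  by rewrite (IH (fun v => g (0 :: v))) big_seq1.
rewrite big_cat !big_map; congr (_ + _)%R.
  by apply: etrans (IH (fun v => g (0 :: v))) _; rewrite [runs b]runsE.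
apply: etrans (IH (g \o inc_head)) _; rewrite [runs b]runsE /=.
apply: eq_bigr => c _; apply: eq_block_sum => v /=.
by rewrite inc_head_runs_cat.
Qed.

Lemma block_sum_swap phi x y a : perm_invariant phi ->
  block_sum phi [:: x, y & a] = block_sum phi [:: y, x & a].
Proof.
move=> hphi /=; rewrite exchange_big; apply: eq_bigr => c _; apply: eq_bigr => d _.
by apply: eq_block_sum => v; apply: hphi; rewrite perm_catCA.
Qed.

Lemma block_sum_rem phi x a : perm_invariant phi -> x \in a ->
  block_sum phi a = block_sum phi (x :: rem x a).
Proof.
elim: a phi => [//|y a IH] phi hphi /predU1P[-> | xa]; rewrite [rem _ _]/=.
  by rewrite eqxx.
case: eqVneq => [-> //|nyx].
rewrite block_sum_swap // [LHS]block_sum_cons [RHS]block_sum_cons.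
by apply: eq_bigr => c _; rewrite -IH //; apply: perm_invariant_catl.
Qed.

Lemma block_sum_perm phi a a' : perm_invariant phi -> perm_eq a a' ->
  block_sum phi a = block_sum phi a'.
Proof.
elim: a a' phi => [|x a IH] a' phi hphi pa.
  by move: pa; rewrite perm_sym => /perm_nilP ->.
have xa' : x \in a' by rewrite -(perm_mem pa) mem_head.
rewrite (block_sum_rem hphi xa') /=; apply: eq_bigr => c _.
apply: IH; first exact: perm_invariant_catl.
by rewrite -(perm_cons x) (perm_trans pa) // perm_to_rem.
Qed.

Lemma mobius_run_invariant m F : run_invariant m F -> run_invariant m (mobius F).
Proof.
move=> hF.
(* [psi] vanishes off compositions of [m.+1], which makes it perm-invariant. *)
pose psi v : int :=
  if sumn v + size v == m.+1 then ((-1) ^+ sumn v * F (of_runs v))%R else 0%R.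
have psi_runs c : size c = m -> psi (runs c) = ((-1) ^+ count id c * F c)%R.
  move=> sc; rewrite /psi sumn_size_runs sc eqxx sumn_runs; congr (_ * _)%R.
  by symmetry; apply: hF; rewrite // of_runsK // [runs c]runsE.
have psi_perm : perm_invariant psi.
  move=> v v' pv; rewrite /psi (perm_sumn pv) (perm_size pv).
  case: eqP => // e; congr (_ * _)%R.
  have v'0 : v' != [::] by case: (v') e.
  have v0 : v != [::] by rewrite -size_eq0 (perm_size pv) size_eq0.
  apply: hF; last by rewrite !of_runsK.
  apply/succn_inj; rewrite -sumn_size_runs of_runsK //.
  by rewrite (perm_sumn pv) (perm_size pv) e.
have mobius_block b : size b = m -> mobius F b = block_sum psi (runs b).
  move=> sb; rewrite -sum_submasks_runs; apply: eq_big_seq => c cb.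
  by rewrite psi_runs // (size_submasks cb).
move=> b b' sb pb; rewrite !mobius_block -?(perm_runs_size pb) //.
exact: block_sum_perm.
Qed.

(** * Inclusion-exclusion for descent counts *)

Definition marked (b : bitseq) : seq nat := mask b (iota 0 (size b)).

Lemma marked_cons x b :
  marked (x :: b) = (if x then [:: 0] else [::]) ++ map succn (marked b).
Proof.
by rewrite /marked /= (iotaDl 1 0) -map_mask; case: x.
Qed.

Lemma mem_marked b j : (j \in marked b) = (j < size b) && nth false b j.
Proof.
elim: b j => [//|x b IH] [|j]; rewrite marked_cons mem_cat.
  by case: x => //=; apply/mapP => -[].
by rewrite (mem_map succn_inj) IH; case: x.
Qed.

Lemma all_marked_cons (d : pred nat) x b :
  all d (marked (x :: b)) = (x ==> d 0) && all (preim succn d) (marked b).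
Proof. by rewrite marked_cons all_cat all_map; case: x => //=; rewrite andbT. Qed.

Lemma has_marked_cons (d : pred nat) x b :
  has d (marked (x :: b)) = (x && d 0) || has (preim succn d) (marked b).
Proof. by rewrite marked_cons has_cat has_map; case: x => //=; rewrite orbF. Qed.

Lemma mobius_all_marked (d : pred nat) b :
  mobius (fun c => (all d (marked c))%:R%R) b = (~~ has d (marked b))%:R%R.
Proof.
elim: b d => [|x b IH] d; first by rewrite /mobius big_seq1 mul1r.
rewrite /mobius has_marked_cons [submasks _]/=.
case: x; rewrite ?big_cat !big_map /=; last first.
  by rewrite -IH; apply: eq_bigr => c _; rewrite all_marked_cons.
case: (d 0) => /=.
  rewrite -big_split big1 // => c _ /=; rewrite !all_marked_cons /=.
  by rewrite add1n exprS mulN1r mulNr addrN.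
rewrite [X in (_ + X)%R]big1 ?addr0 => [|c _]; rewrite ?all_marked_cons ?mulr0 //.
by rewrite -IH; apply: eq_bigr => c _; rewrite all_marked_cons add0n.
Qed.

Lemma mobius_hasN_marked (d : pred nat) b :
  mobius (fun c => (~~ has d (marked c))%:R%R) b = (all d (marked b))%:R%R.
Proof.
rewrite -[all d _]negbK -has_predC -mobius_all_marked.
by apply: eq_bigr => c _; rewrite all_predC.
Qed.

(* Junk at [j >= n.-1]; only masks of length [n.-1] are ever used. *)
Definition desc n (w : {perm 'I_n}) (j : nat) : bool := Defs.pval w j.+1 < Defs.pval w j.

Definition ncover n (S : {set {perm 'I_n}}) (b : bitseq) : int :=
  (\sum_(w in S) (all (desc w) (marked b))%:R)%R.

Definition navoid n (S : {set {perm 'I_n}}) (b : bitseq) : int :=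
  (\sum_(w in S) (~~ has (desc w) (marked b))%:R)%R.

Lemma mobius_sum (I : finType) (P : pred I) (F : I -> bitseq -> int) b :
  mobius (fun c => \sum_(i | P i) F i c)%R b = (\sum_(i | P i) mobius (F i) b)%R.
Proof.
rewrite /mobius exchange_big /=.
by under eq_bigr do rewrite mulr_sumr.
Qed.

Lemma mobius_ncover n (S : {set {perm 'I_n}}) : mobius (ncover S) =1 navoid S.
Proof. by move=> b; rewrite mobius_sum; under eq_bigr do rewrite mobius_all_marked. Qed.

Lemma mobius_navoid n (S : {set {perm 'I_n}}) : mobius (navoid S) =1 ncover S.
Proof. by move=> b; rewrite mobius_sum; under eq_bigr do rewrite mobius_hasN_marked. Qed.

(** * Harmonicity *)

Definition bitmask m (I : {set 'I_m}) : bitseq := mkseq (inI I) m.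

Lemma inI_ord m (I : {set 'I_m}) (i : 'I_m) : inI I i = (i \in I).
Proof. by rewrite /inI valK. Qed.

Lemma inI_out m (I : {set 'I_m}) k : m <= k -> inI I k = false.
Proof. by move=> mk; rewrite /inI insubF // ltnNge mk. Qed.

Lemma bitmask_set m (c : bitseq) :
  size c = m -> bitmask [set i : 'I_m | nth false c i] = c.
Proof.
move=> <-; rewrite /bitmask -[RHS](mkseq_nth false); apply: eq_mkseq => k.
rewrite /inI; case: insubP => [i _ <-|]; first by rewrite inE.
by rewrite -leqNgt => /(nth_default false).
Qed.

Lemma all_marked_bitmask m (I : {set 'I_m}) (d : pred nat) :
  all d (marked (bitmask I)) = [forall i in I, d i].
Proof.
apply/allP/forall_inP => [H i iI | H j].
  by apply: H; rewrite mem_marked size_mkseq ltn_ord nth_mkseq // inI_ord.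
rewrite mem_marked size_mkseq => /andP[jm]; rewrite nth_mkseq //.
by rewrite -[j]/(val (Ordinal jm)) inI_ord; apply: H.
Qed.

Lemma ssI_AS n (S : {set {perm 'I_n}}) (I : {set 'I_n.-1}) :
  ssI (AS S) I = [set w in S | all (desc w) (marked (bitmask I))].
Proof.
apply/setP => w; rewrite inE all_marked_bitmask /ssI.
case: eqP => [-> | /eqP/set0Pn[i0 i0I]].
  by rewrite andb_idr // => _; apply/forall_inP => i; rewrite inE.
apply/bigcapP/andP => [H | [wS /forall_inP H] i iI]; last by rewrite inE wS; apply: H.
split; first by have := H i0 i0I; rewrite inE => /andP[].
by apply/forall_inP => i iI; have := H i iI; rewrite inE => /andP[].
Qed.

Lemma card_ssI_AS n (S : {set {perm 'I_n}}) (I : {set 'I_n.-1}) :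
  (#|ssI (AS S) I|%:R)%R = ncover S (bitmask I).
Proof.
rewrite ssI_AS /ncover -sum1_card natr_sum big_mkcond [RHS]big_mkcond /=.
by apply: eq_bigr => w _; rewrite inE; case: (w \in S); case: all.
Qed.

Definition runlen N (p : nat -> bool) k := find (fun l => ~~ p (k + l)) (iota 0 N).

Lemma head_runs b : head 0 (runs b) = find negb b.
Proof. by elim: b => [|[] b IH] //=; rewrite IH. Qed.

Lemma runlen0 N m (p : nat -> bool) : (forall k, m <= k -> p k = false) -> m < N ->
  runlen N p 0 = head 0 (runs (mkseq p m)).
Proof.
move=> pm mN; rewrite head_runs /runlen (eq_find (a2 := preim p negb)) => [|l //].
rewrite -find_map -(subnKC mN) addSnnS iotaD map_cat /= add0n pm // find_cat.
by case: ifP => // /negbT/hasNfind ->; rewrite addn0.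
Qed.

Lemma runlenS N (p : nat -> bool) k : runlen N p k.+1 = runlen N (p \o succn) k.
Proof. by apply: eq_find => l; rewrite /= addSn. Qed.

(* [prev] stands for the value of [p] at position -1. *)
Definition starts_run (prev : bool) (p : nat -> bool) k :=
  p k && ~~ (if k is j.+1 then p j else prev).

Lemma run_lengths_runs N m : forall (p : nat -> bool) prev,
  (forall k, m <= k -> p k = false) -> m < N ->
  [seq runlen N p k | k <- iota 0 m & starts_run prev p k] =
  filter (ltn 0) ((if prev then behead else id) (runs (mkseq p m))).
Proof.
elim: m => [|m IH] p prev pm mN; first by case: prev.
have mkseq_cons : mkseq p m.+1 = p 0 :: mkseq (p \o succn) m.
  by rewrite /mkseq /= (iotaDl 1 0) -map_comp.
have shift : [seq runlen N p k | k <- iota 1 m & starts_run prev p k] =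
  [seq runlen N (p \o succn) k | k <- iota 0 m & starts_run (p 0) (p \o succn) k].
  rewrite (iotaDl 1 0) filter_map -map_comp.
  rewrite (@eq_filter _ _ (starts_run (p 0) (p \o succn))) => [|[]//].
  by apply: eq_map => k; rewrite /= runlenS.
have IH' := IH (p \o succn) (p 0) (fun k mk => pm k.+1 mk) (ltnW mN).
have head0 := runlen0 pm mN; rewrite mkseq_cons in head0.
rewrite mkseq_cons [iota 0 _]/= [filter _ (_ :: _)]/= (fun_if (map _)) /= shift IH'.
by rewrite /starts_run; case: (p 0) head0 => head0; case: prev {shift}; rewrite /= ?head0.
Qed.

Lemma run_decompE m (I : {set 'I_m}) :
  run_decomp I = sort geq (filter (ltn 0) (runs (bitmask I))).
Proof.
rewrite /run_decomp -(@run_lengths_runs m.+1 m (inI I) false) //; last exact: inI_out.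
congr (sort _ (map _ _)); apply: eq_filter => -[|k];
  by rewrite /run_start /starts_run //= orbF.
Qed.

Lemma perm_filter_pos (u : seq nat) :
  perm_eq u (filter (ltn 0) u ++ nseq (count_mem 0 u) 0).
Proof.
rewrite -(perm_filterC (ltn 0) u) perm_cat2l.
rewrite (@eq_filter _ _ (pred1 0)) => [|[]//].
by have /all_pred1P -> := filter_all (pred1 0) u; rewrite size_filter.
Qed.

Lemma sumn_filter_pos (u : seq nat) : sumn (filter (ltn 0) u) = sumn u.
Proof. by rewrite [RHS](perm_sumn (perm_filter_pos u)) sumn_cat sumn_nseq addn0. Qed.

Lemma perm_eq_filter_pos (u u' : seq nat) : size u = size u' ->
  perm_eq (filter (ltn 0) u) (filter (ltn 0) u') -> perm_eq u u'.
Proof.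
move=> su pf; have := perm_size (perm_filter_pos u).
have := perm_size (perm_filter_pos u').
rewrite !size_cat !size_nseq -su (perm_size pf) => -> /addnI c0.
apply: perm_trans (perm_filter_pos u) _; rewrite -c0 perm_sym.
by apply: perm_trans (perm_filter_pos u') _; rewrite perm_cat2r perm_sym.
Qed.

Lemma run_decomp_perm m (I J : {set 'I_m}) :
  run_decomp I = run_decomp J <-> perm_eq (runs (bitmask I)) (runs (bitmask J)).
Proof.
have geq_sortP u v : reflect (sort geq u = sort geq v) (perm_eq u v).
  apply: perm_sortP => [x y | y x z xy yz | x y xy]; first exact: leq_total.
    exact: leq_trans yz xy.
  by apply: anti_leq; rewrite andbC.
rewrite !run_decompE; split=> [/geq_sortP pf | pIJ]; last first.
  exact/geq_sortP/(perm_filter (ltn 0) pIJ).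
have su : sumn (runs (bitmask I)) = sumn (runs (bitmask J)).
  by rewrite -[LHS]sumn_filter_pos -[RHS]sumn_filter_pos (perm_sumn pf).
apply: perm_eq_filter_pos pf; apply/(@addnI (sumn (runs (bitmask J)))).
by rewrite -{1}su !sumn_size_runs !size_mkseq.
Qed.

Lemma harmonic_AS n (S : {set {perm 'I_n}}) :
  harmonic (AS S) <-> run_invariant n.-1 (ncover S).
Proof.
split=> [hS c c' sc pc | hS I J /run_decomp_perm pIJ].
  have sc' : size c' = n.-1 by rewrite -sc (perm_runs_size pc).
  rewrite -(bitmask_set sc) -(bitmask_set sc') -!card_ssI_AS; congr (_%:R)%R.
  by apply: hS; apply/run_decomp_perm; rewrite !bitmask_set.
apply/eqP; rewrite -(@Num.Theory.eqr_nat int) !card_ssI_AS.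
by rewrite (hS _ _ _ pIJ) ?size_mkseq.
Qed.

(** * Symmetry *)

Definition ties (s : seq nat) : bitseq :=
  if s is x :: t then pairmap (fun a b => a == b) x t else [::].

Lemma size_ties s : size (ties s) = (size s).-1.
Proof. by case: s => //= x t; rewrite size_pairmap. Qed.

Lemma nth_ties s j :
  j < (size s).-1 -> nth false (ties s) j = (nth 0 s j == nth 0 s j.+1).
Proof. by case: s => //= x t jt; rewrite (nth_pairmap 0). Qed.

Lemma Qfun_navoid n (S : {set {perm 'I_n}}) s : sorted leq s -> size s = n ->
  (Qfun S s)%:R%R = navoid S (ties s).
Proof.
move=> s_sorted sn; rewrite /Qfun /navoid natr_sum; apply: eq_bigr => w _.
rewrite /Ffund sn eqxx s_sorted -all_predC.
set F := [forall _, _]; suff -> : F = all (predC (desc w)) (marked (ties s)).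
  by case: all.
apply/forallP/allP => [H j | H j].
  rewrite mem_marked size_ties sn => /andP[jn]; rewrite nth_ties ?sn // => /eqP e.
  apply/negP => dj; have j1 : j.+1 < n by lia.
  by have := H (Ordinal (ltnW j1)); rewrite inE /= j1 -/(desc w j) dj e ltnn.
apply/implyP; rewrite inE => /andP[j1 dj]; apply/implyP => _; rewrite ltn_neqAle.
rewrite (sorted_leq_nth leq_trans leqnn 0 s_sorted) ?inE ?sn // andbT.
apply: contraL dj => e; apply: (H j); rewrite mem_marked size_ties sn.
by rewrite nth_ties ?sn ?(eqP e) ?eqxx ?andbT; lia.
Qed.

Definition mults (s : seq nat) : seq nat := [seq (count_mem v s).-1 | v <- undup s].

Lemma sorted_mem_head x y t : sorted leq [:: x, y & t] -> x \in y :: t -> x = y.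
Proof.
move=> /= /andP[xy yt] /predU1P[//|xt]; apply/eqP; rewrite eqn_leq xy /=.
by have /allP := order_path_min leq_trans yt; apply.
Qed.

Lemma undup_sorted x t :
  sorted leq (x :: t) -> undup (x :: t) = x :: behead (undup (x :: t)).
Proof.
elim: t x => [//|y t IH] x s_sorted; rewrite [undup _]/=.
case: ifP => // /(sorted_mem_head s_sorted) exy; subst y.
exact/IH/(path_sorted s_sorted).
Qed.

Lemma mults_cons_eq x t : sorted leq (x :: t) ->
  mults [:: x, x & t] = inc_head (mults (x :: t)).
Proof.
move=> s_sorted; rewrite /mults.
have -> : undup [:: x, x & t] = undup (x :: t) by rewrite /= mem_head.
have := undup_uniq (x :: t); rewrite (undup_sorted s_sorted).
set U := behead _ => /andP[xU _] /=; rewrite eqxx; congr (_ :: _).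
apply/eq_in_map => v vU /=; case: eqP => // exv.
by move: xU; rewrite exv vU.
Qed.

Lemma mults_cons_neq x y t : sorted leq [:: x, y & t] -> x != y ->
  mults [:: x, y & t] = 0 :: mults (y :: t).
Proof.
move=> s_sorted nxy; rewrite /mults.
have xt : x \notin y :: t by apply: contra nxy => /(sorted_mem_head s_sorted) ->.
have -> : undup [:: x, y & t] = x :: undup (y :: t) by rewrite [LHS]/= (negbTE xt).
have /= cx := count_memPn xt.
rewrite /= eqxx cx; congr (_ :: _); apply/eq_in_map => v.
rewrite -[_ \in _]/(v \in undup (y :: t)) mem_undup => vt /=.
by case: eqP => // exv; move: xt; rewrite exv vt.
Qed.

Lemma runs_ties s : sorted leq s -> s != [::] -> runs (ties s) = mults s.
Proof.
case: s => [//|x t] + _; elim: t x => [|y t IH] x s_sorted.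
  by rewrite /mults /= eqxx.
have t_sorted := path_sorted s_sorted.
case: (eqVneq x y) => [exy | nxy]; last first.
  by rewrite mults_cons_neq // -IH //= (negbTE nxy).
by subst y; rewrite mults_cons_eq // -IH //=; case: eqP.
Qed.

Lemma perm_mults_relabel (sg : nat -> nat) s : injective sg ->
  perm_eq (mults (sort leq (map sg s))) (mults s).
Proof.
move=> sg_inj; set s' := sort leq _.
have ps' : perm_eq s' (map sg s) by rewrite perm_sort.
have -> : mults s = [seq (count_mem v s').-1 | v <- map sg (undup s)].
  rewrite -map_comp; apply: eq_map => v /=; rewrite (seq.permP ps') count_map.
  by congr _.-1; apply: eq_count => u /=; rewrite inj_eq.
rewrite /mults -(undup_map_inj sg_inj); apply: perm_map.
by apply: perm_undup; apply: perm_mem.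
Qed.

Fixpoint staircase (x : nat) (b : bitseq) : seq nat :=
  if b is y :: b' then x :: staircase (x + ~~ y) b' else [:: x].

Lemma staircaseE x b : staircase x b = x :: behead (staircase x b).
Proof. by case: b. Qed.

Lemma size_staircase x b : size (staircase x b) = (size b).+1.
Proof. by elim: b x => //= y b IH x; rewrite IH. Qed.

Lemma staircase_ge x b v : v \in staircase x b -> x <= v.
Proof.
elim: b x => [|y b IH] x /=; first by rewrite inE => /eqP ->.
by case/predU1P => [-> // | /IH]; apply: leq_trans; rewrite leq_addr.
Qed.

Lemma sorted_staircase x b : sorted leq (staircase x b).
Proof.
elim: b x => [//|y b IH] x /=.
by move: (IH (x + ~~ y)); rewrite [staircase _ b]staircaseE /= leq_addr.
Qed.

Lemma ties_staircase x b : ties (staircase x b) = b.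
Proof.
elim: b x => [//|y b IH] x /=.
move: (IH (x + ~~ y)); rewrite [staircase _ b]staircaseE /= => ->.
by case: y; rewrite /= ?addn0 ?eqxx // -{1}(addn0 x) eqn_add2l.
Qed.

Lemma count_staircase x b k :
  count_mem (x + k) (staircase x b) = nth 0 (map succn (runs b)) k.
Proof.
elim: b x k => [|y b IH] x k /=; rewrite -[X in X == _](addn0 x) eqn_add2l.
  by case: k => [|k]; rewrite /= ?nth_nil.
case: y; rewrite /= ?addn0.
  by rewrite IH [runs b]runsE; case: k.
case: k => [|k]; last by rewrite addn1 -addSnnS IH.
rewrite addn0 (count_memPn _) // addn1.
by apply/negP => /staircase_ge; rewrite ltnn.
Qed.

Lemma relabel_staircase c c' : perm_eq (runs c) (runs c') ->
  exists2 sg : nat -> nat,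
    bijective sg & sort leq (map sg (staircase 0 c)) = staircase 0 c'.
Proof.
rewrite perm_sym => /(perm_iotaP 0)[Is pIs ec'].
set k := size (runs c) in pIs.
have sizeIs : size Is = k by rewrite (perm_size pIs) size_iota.
have memIs i : (i \in Is) = (i < k) by rewrite (perm_mem pIs) mem_iota.
have uIs : uniq Is by rewrite (perm_uniq pIs) iota_uniq.
pose sg i := if i < k then index i Is else i.
pose tau j := nth j Is j.
have sgK : cancel sg tau.
  move=> i; rewrite /sg /tau; case: ifP => ik; first by rewrite nth_index // memIs.
  by rewrite nth_default // sizeIs leqNgt ik.
have tauK : cancel tau sg.
  move=> j; rewrite /sg /tau; case: (ltnP j k) => jk.
    by rewrite -memIs mem_nth ?sizeIs // index_uniq ?sizeIs.
  by rewrite nth_default ?sizeIs // ltnNge jk.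
exists sg; first by exists tau.
apply: (sorted_eq leq_trans anti_leq (sort_sorted leq_total _) (sorted_staircase 0 c')).
rewrite perm_sort; apply/allP => j _; apply/eqP.
have preim_sg : preim sg (pred1 j) =1 pred1 (tau j).
  by move=> i; rewrite /= -{1}(tauK j) (can_eq sgK).
rewrite count_map (eq_count preim_sg).
rewrite [LHS](count_staircase 0) [RHS](count_staircase 0) ec' -map_comp.
case: (ltnP j k) => jk; last by rewrite /tau !nth_default ?size_map ?sizeIs.
have tjk : tau j < k by rewrite -memIs mem_nth ?sizeIs.
by rewrite !(nth_map 0) ?sizeIs // /tau (set_nth_default 0) ?sizeIs.
Qed.

Lemma symmetric_navoid n (S : {set {perm 'I_n}}) :
  symmetric_set S <-> run_invariant n.-1 (navoid S).
Proof.
split=> [hsym c c' sc pc | hinv sg sg_bij s s_sorted].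
  have sc' : size c' = n.-1 by rewrite -sc (perm_runs_size pc).
  case: n S hsym sc sc' => [|n] S hsym sc sc'.
    by rewrite (size0nil sc) (size0nil sc').
  have [sg sg_bij e] := relabel_staircase pc.
  rewrite -(ties_staircase 0 c) -(ties_staircase 0 c').
  rewrite -!Qfun_navoid ?sorted_staircase ?size_staircase ?sc ?sc' //.
  by rewrite -e hsym // sorted_staircase.
case: (eqVneq (size s) n) => [sn | sn]; last first.
  by rewrite /Qfun !big1 // => w _; rewrite /Ffund ?size_sort ?size_map (negbTE sn).
case: s s_sorted sn => [//|x t] s_sorted sn; set s' := sort leq _.
have s'_sorted : sorted leq s' := sort_sorted leq_total _.
have s'n : size s' = n by rewrite size_sort size_map.
apply/eqP; rewrite -(@Num.Theory.eqr_nat int) !Qfun_navoid //; apply/eqP.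
apply: hinv; first by rewrite size_ties s'n.
rewrite !runs_ties // -?size_eq0 ?s'n -?sn //.
exact/perm_mults_relabel/bij_inj.
Qed.

Lemma run_invariant_ncover_navoid m n (S : {set {perm 'I_n}}) :
  run_invariant m (ncover S) <-> run_invariant m (navoid S).
Proof.
split=> h c c' sc pc; [rewrite -!mobius_ncover | rewrite -!mobius_navoid];
  exact: mobius_run_invariant h c c' sc pc.
Qed.

Theorem proposition3p14 (n : nat) (S : {set {perm 'I_n}}) :
  symmetric_set S <-> harmonic (AS S).
Proof.
split=> h.
  by apply/harmonic_AS/run_invariant_ncover_navoid/symmetric_navoid.
by apply/symmetric_navoid/run_invariant_ncover_navoid/harmonic_AS.
Qed.
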